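(* Let $k\ge 3$ and let $G=(V,E)$ be a $k$-uniform hyperstar of size $d\ge 2$, with $V=[n]$, $E=\{e_1,\ldots,e_d\}$, and heart the vertex $1$. Let $\mathcal L$ be its Laplacian tensor. Then a nonzero vector $\mathbf x\in\mathbb R^n$ is an H-eigenvector of $\mathcal L$ corresponding to the H-eigenvalue $1$ if and only if $x_1=0$ and $\sum_{i=1}^d\prod_{s\in e_i\setminus\{1\}}x_s=0$.
   Context: A $k$-uniform hyperstar of size $d$ is a hypergraph whose vertex set is a disjoint union $V=V_0\cup V_1\cup\cdots\cup V_d$ with $|V_0|=1$, $|V_1|=\cdots=|V_d|=k-1$, and edge set $\{V_0\cup V_i: i\in[d]\}$; the vertex in $V_0$ is the heart. For a $k$-uniform hypergraph with $d_i$ the number of edges containing $i$, the Laplacian tensor $\mathcal L=\mathcal D-\mathcal A$ ($\mathcal D$ diagonal with entries $d_i$, $\mathcal A$ with entries $\frac1{(k-1)!}$ at index tuples forming an edge and $0$ otherwise) satisfies $(\mathcal L\mathbf x^{k-1})_i=d_ix_i^{k-1}-\sum_{e\in E,\,i\in e}\prod_{s\in e\setminus\{i\}}x_s$. A nonzero $\mathbf x$ is an H-eigenvector for the H-eigenvalue $\lambda$ if $(\mathcal L\mathbf x^{k-1})_i=\lambda x_i^{k-1}$ for all $i\in[n]$. *)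

From mathcomp Require Import all_boot all_order all_algebra.
Set Implicit Arguments. Unset Strict Implicit. Unset Printing Implicit Defensive.
Import Order.TTheory GRing.Theory Num.Theory.
Local Open Scope ring_scope.

(* A k-uniform hypergraph on vertex set 'I_n is given by its family of edges
   E : 'I_d -> {set 'I_n} (edges e_1, ..., e_d, indexed by 'I_d). *)

Definition hdegree (n d : nat) (E : 'I_d -> {set 'I_n}) (i : 'I_n) : nat :=
  #|[set j | i \in E j]|.

(* (L x^{k-1})_i = d_i x_i^{k-1} - sum_{e in E, i in e} prod_{s in e \ {i}} x_s *)
Definition lap_act (R : comRingType) (n d : nat) (k : nat)
    (E : 'I_d -> {set 'I_n}) (x : 'I_n -> R) (i : 'I_n) : R :=
  (hdegree E i)%:R * x i ^+ k.-1
  - \sum_(j : 'I_d | i \in E j) \prod_(s in E j :\ i) x s.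

Definition is_H_eigenvector (R : comRingType) (n d k : nat)
    (E : 'I_d -> {set 'I_n}) (lam : R) (x : 'I_n -> R) : Prop :=
  (exists i, x i != 0) /\
  (forall i, lap_act k E x i = lam * x i ^+ k.-1).

(* E is a k-uniform hyperstar with heart h: every edge is {h} ∪ V_j with
   |V_j| = k-1, the V_j pairwise disjoint and not containing h, and
   V = {h} ∪ V_1 ∪ ... ∪ V_d. *)
Definition is_hyperstar (n d k : nat) (E : 'I_d -> {set 'I_n}) (h : 'I_n) : Prop :=
  [/\ forall j, h \in E j,
      forall j, #|E j| = k,
      forall j j', j != j' -> E j :&: E j' = [set h]
    & forall v, exists j, v \in E j].

From mathcomp Require Import all_boot all_order all_algebra.
Import Order.TTheory GRing.Theory Num.Theory.
Local Open Scope ring_scope.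
Set Implicit Arguments.

(* Write P_j for the product of x over the leaves of the edge e_j.  A leaf v
   lies in exactly one edge e_j, where the eigen-equation for the eigenvalue 1
   reads prod_(s in e_j \ v) x_s = 0; this product contains the factor x_h,
   which gives the converse, and multiplying it by x_v shows x_h P_j = 0.  At
   the heart the equation reads sum_j P_j = (d - 1) x_h^(k-1); multiplying by
   x_h gives (d - 1) x_h^k = 0, so x_h = 0 and then sum_j P_j = 0. *)

Section Hyperstar.

Variables (n d k : nat) (E : 'I_d -> {set 'I_n}) (h : 'I_n).
Hypothesis Estar : is_hyperstar k E h.

Lemma hyperstar_leaf_edges (v : 'I_n) (j : 'I_d) :
  v != h -> v \in E j -> [set j' | v \in E j'] = [set j].
Proof.
case: Estar => _ _ Edisj _ vNh vEj; apply/setP=> j'; rewrite !inE.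
apply/idP/eqP=> [vEj'|->//]; apply/eqP; apply: contraT => j'Nj.
by move/setP/(_ v): (Edisj _ _ j'Nj); rewrite !inE vEj' vEj (negbTE vNh).
Qed.

Lemma hyperstar_edge_has_leaf (j : 'I_d) :
  (1 < k)%N -> exists2 v, v \in E j & v != h.
Proof.
case: Estar => hE Ecard _ _ k_gt1.
have : (0 < #|E j :\ h|)%N by rewrite -(Ecard j) (cardsD1 h) hE in k_gt1.
by case/card_gt0P=> v; rewrite !inE => /andP[vNh vEj]; exists v.
Qed.

Lemma hdegree_heart : hdegree E h = d.
Proof.
case: Estar => hE _ _ _; rewrite /hdegree -[RHS]card_ord -cardsT.
by apply: eq_card => j; rewrite !inE hE.
Qed.

Context {R : comRingType} (x : 'I_n -> R).

Lemma lap_act_heart :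
  lap_act k E x h = d%:R * x h ^+ k.-1 - \sum_(j < d) \prod_(s in E j :\ h) x s.
Proof.
case: Estar => hE _ _ _; rewrite /lap_act hdegree_heart.
by congr (_ - _); apply: eq_bigl => j; rewrite hE.
Qed.

Lemma lap_act_leaf (v : 'I_n) (j : 'I_d) : v != h -> v \in E j ->
  lap_act k E x v = x v ^+ k.-1 - \prod_(s in E j :\ v) x s.
Proof.
move=> vNh vEj; rewrite /lap_act /hdegree (hyperstar_leaf_edges vNh vEj).
rewrite cards1 mul1r; congr (_ - _).
by apply: big_pred1 => j'; move/setP/(_ j'): (hyperstar_leaf_edges vNh vEj); rewrite !inE.
Qed.

Lemma prod_edge_leafD1 (v : 'I_n) (j : 'I_d) : v != h -> v \in E j ->
  \prod_(s in E j :\ v) x s = x h * \prod_(s in E j :\ v :\ h) x s.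
Proof.
case: Estar => hE _ _ _ vNh vEj.
by rewrite (big_setD1 h) // !inE eq_sym vNh hE.
Qed.

Lemma heart_mul_prod_edge (v : 'I_n) (j : 'I_d) : v \in E j ->
  x h * \prod_(s in E j :\ h) x s = x v * \prod_(s in E j :\ v) x s.
Proof. by case: Estar => hE _ _ _ vEj; rewrite -!big_setD1. Qed.

End Hyperstar.

Theorem proposition5p3 (R : realFieldType) (k n d : nat)
    (E : 'I_d -> {set 'I_n.+1}) :
  (3 <= k)%N -> (2 <= d)%N -> is_hyperstar k E ord0 ->
  forall x : 'I_n.+1 -> R, (exists i, x i != 0) ->
  (is_H_eigenvector k E 1 x <->
   (x ord0 = 0 /\ \sum_(j < d) \prod_(s in E j :\ ord0) x s = 0)).
Proof.
move=> k_ge3 d_ge2 Estar x x_nz; have k_gt1 : (1 < k)%N by apply: ltnW.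
have zero_pow : 0 ^+ k.-1 = 0 :> R by rewrite expr0n -subn1 subn_eq0 leqNgt k_gt1.
split=> [[_ eig] | [x0 sum0]]; last first.
  split=> [// | v]; rewrite mul1r; case: (eqVneq v ord0) => [-> | vN0].
    by rewrite (lap_act_heart Estar) x0 sum0 zero_pow mulr0 subr0.
  have [_ _ _ /(_ v)[j vEj]] := Estar.
  by rewrite (lap_act_leaf Estar x j vN0 vEj) (prod_edge_leafD1 Estar x j vN0 vEj) x0 mul0r subr0.
have heart_mul_P (j : 'I_d) : x ord0 * \prod_(s in E j :\ ord0) x s = 0.
  have [v vEj vN0] := hyperstar_edge_has_leaf Estar j k_gt1.
  have := eig v; rewrite (lap_act_leaf Estar x j vN0 vEj) mul1r => /eqP.
  rewrite -subr_eq0 addrAC subrr add0r oppr_eq0 => /eqP leaf0.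
  by rewrite (heart_mul_prod_edge Estar x j vEj) leaf0 mulr0.
have sumP : \sum_(j < d) \prod_(s in E j :\ ord0) x s = (d%:R - 1) * x ord0 ^+ k.-1.
  have := eig ord0; rewrite (lap_act_heart Estar) mul1r => /eqP.
  by rewrite subr_eq addrC -subr_eq => /eqP <-; rewrite mulrBl mul1r.
have x0 : x ord0 = 0.
  have /eqP : x ord0 * \sum_(j < d) \prod_(s in E j :\ ord0) x s = 0 by rewrite mulr_sumr big1.
  rewrite sumP mulrCA mulf_eq0 subr_eq0 -[1]/(1%:R) eqr_nat; case: (d) d_ge2 => [|[|d']] //= _.
  by rewrite -exprS expf_eq0 => /andP[_ /eqP].
by rewrite sumP x0 zero_pow mulr0.
Qed.
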